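(* Let $k\ge 2$, $n\ge1$, and let $L_n$ and the bijection $\varphi:L_n\to E^{n-1}$ be as in the context. If $A\subseteq L_n$ is an intersecting antichain in $E^n$, then $\varphi(A)$ is an intersecting antichain in $E^{n-1}$; and if $B\subseteq E^{n-1}$ is an intersecting antichain, then $\varphi^{-1}(B)$ is an intersecting antichain in $E^n$.
   Context: $E=\{0,\dots,k-1\}$. For $\mathbf a,\mathbf b\in E^m$ write $\mathbf a\preceq\mathbf b$ if $a_i\le b_i$ for all $i$. $A\subseteq E^m$ is an antichain if there are no distinct $\mathbf a,\mathbf b\in A$ with $\mathbf a\preceq\mathbf b$; $A$ is intersecting if for all $\mathbf a,\mathbf b\in A$ (including $\mathbf a=\mathbf b$) there is $i$ with $a_i+b_i\ge k$. For $\mathbf a\in E^n$, $w(\mathbf a)=a_1+\dots+a_n$, and $\mathcal B_t=\{\mathbf a\in E^n: w(\mathbf a)=t\}$. Let $g=\lfloor n(k-1)/2\rfloor$ and $C_i=\{\mathbf a\in E^n: a_1=i\}$. Define $L_n=(\mathcal B_0\cup\dots\cup\mathcal B_g)\cap(C_0\cup C_{k-1})$ if $n(k-1)$ is odd, and $L_n=((\mathcal B_0\cup\dots\cup\mathcal B_{g-1})\cap(C_0\cup C_{k-1}))\cup(\mathcal B_g\cap C_0)$ if $n(k-1)$ is even. For $a\in E$ let $\overline a=k-1-a$. Define $\varphi(a_1,\dots,a_n)=(a_2,\dots,a_n)$ if $a_1=0$ and $\varphi(a_1,\dots,a_n)=(\overline{a}_2,\dots,\overline{a}_n)$ if $a_1=k-1$;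 this map is a bijection $L_n\to E^{n-1}$. *)

From mathcomp Require Import all_boot.
Set Implicit Arguments. Unset Strict Implicit. Unset Printing Implicit Defensive.

(* E = {0,...,k-1} is 'I_k ; E^n is {ffun 'I_n -> 'I_k}. *)
Definition vec (k n : nat) := {ffun 'I_n -> 'I_k}.

Definition vle k n (a b : vec k n) : bool := [forall i : 'I_n, a i <= b i].

Definition antichain k n (A : {set vec k n}) : Prop :=
  forall a b, a \in A -> b \in A -> a != b -> ~~ vle a b.

Definition intersecting k n (A : {set vec k n}) : Prop :=
  forall a b, a \in A -> b \in A -> exists i : 'I_n, k <= a i + b i.

Definition weight k n (a : vec k n) : nat := \sum_(i < n) (a i : nat).

Definition Bt k n (t : nat) : {set vec k n} := [set a : vec k n | weight a == t].

Definition Ci k m (i : nat) : {set vec k m.+1} := [set a : vec k m.+1 | (a ord0 : nat) == i].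

(* L_n for n = m.+1 *)
Definition Ln (k m : nat) : {set vec k m.+1} :=
  let n := m.+1 in
  let g := (n * (k - 1)) %/ 2 in
  if odd (n * (k - 1)) then
    (\bigcup_(t < g.+1) Bt k n t) :&: (Ci k m 0 :|: Ci k m (k - 1))
  else
    ((\bigcup_(t < g) Bt k n t) :&: (Ci k m 0 :|: Ci k m (k - 1)))
      :|: (Bt k n g :&: Ci k m 0).

(* complement abar = k-1-a : rev_ord has value k - a.+1 *)
Definition cbar k (a : 'I_k) : 'I_k := rev_ord a.

(* phi : E^(m+1) -> E^m ; (a_2..a_n) if a_1 = 0, (abar_2..abar_n) otherwise
   (on L_n the "otherwise" case is exactly a_1 = k-1) *)
Definition phi k m (a : vec k m.+1) : vec k m :=
  if (a ord0 : nat) == 0 then [ffun i => a (lift ord0 i)]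
  else [ffun i => cbar (a (lift ord0 i))].

From mathcomp Require Import all_boot.
From mathcomp Require Import zify.
Set Implicit Arguments. Unset Strict Implicit. Unset Printing Implicit Defensive.

(** For an intersecting antichain only pairs matter, so the theorem reduces to
    showing that [phi] preserves the symmetric pair relation [compatible] on
    [L_n].  When both vectors start with the same digit this is immediate,
    [phi] being a shift or a shifted complement.  In the mixed case, complementing
    one vector exchanges "intersecting" with "not below"; the only other ingredient
    is the weight bound built into [L_n]: for [a, b] in [L_n] with [b_1 = k-1],
    [w(a) + w(b) < n(k-1)], so the tails of [a] and [b] can never be coordinatewise
    complementary or beyond. *)

Section Vectors.

Variables k n : nat.
Implicit Types x y : vec k n.

Definition meets x y : bool := [exists i, k <= x i + y i].

Definition compatible x y : bool :=
  meets x y && ((x == y) || ~~ vle x y && ~~ vle y x).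

Lemma meetsC x y : meets x y = meets y x.
Proof. by apply: eq_existsb => i; rewrite addnC. Qed.

Lemma compatibleC x y : compatible x y = compatible y x.
Proof. by rewrite /compatible meetsC eq_sym [~~ vle x y && _]andbC. Qed.

Definition vcompl x : vec k n := [ffun i => cbar (x i)].

Lemma vcomplE x i : (vcompl x i : nat) = k - (x i).+1.
Proof. by rewrite ffunE. Qed.

Lemma vcomplK : involutive vcompl.
Proof. by move=> x; apply/ffunP => i; apply/val_inj; rewrite /= !vcomplE; have := ltn_ord (x i); lia. Qed.

Lemma meets_vcompl x y : meets x (vcompl y) = ~~ vle x y.
Proof.
rewrite negb_forall; apply: eq_existsb => i.
by rewrite vcomplE -ltnNge; have := ltn_ord (y i); lia.
Qed.

Lemma vle_vcompl x y : vle x (vcompl y) = ~~ meets x y.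
Proof. by rewrite -{2}(vcomplK y) meets_vcompl negbK. Qed.

Lemma vle_vcompl2 x y : vle (vcompl x) (vcompl y) = vle y x.
Proof.
apply: eq_forallb => i; rewrite !vcomplE.
by have := ltn_ord (x i); have := ltn_ord (y i); lia.
Qed.

Lemma weight_vle x y : vle x y -> weight x <= weight y.
Proof. by move/forallP=> le_xy; apply: leq_sum => i _. Qed.

Lemma weightD_vcompl x : weight x + weight (vcompl x) = n * (k - 1).
Proof.
rewrite /weight -big_split /= -[n in n * _]card_ord -sum_nat_const.
by apply: eq_bigr => i _; rewrite vcomplE; have := ltn_ord (x i); lia.
Qed.

Lemma vcompl_vle_weight x y : vle (vcompl y) x -> n * (k - 1) <= weight x + weight y.
Proof. by move/weight_vle; rewrite -(weightD_vcompl y); lia. Qed.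

End Vectors.

Section Tail.

Variables k m : nat.
Implicit Types a b : vec k m.+1.

Definition vtail a : vec k m := [ffun i => a (lift ord0 i)].

Lemma weight_vtail a : weight a = a ord0 + weight (vtail a).
Proof. by rewrite /weight big_ord_recl; congr (_ + _); apply: eq_bigr => i; rewrite ffunE. Qed.

Lemma vle_vtail a b : vle a b = (a ord0 <= b ord0) && vle (vtail a) (vtail b).
Proof.
apply/forallP/andP => [le_ab | [le0 /forallP le_tail] j].
  by split; last apply/forallP => i; rewrite ?ffunE le_ab.
by case: (unliftP ord0 j) => [i ->|->] //; have := le_tail i; rewrite !ffunE.
Qed.

Lemma meets_vtail a b :
  meets a b = (k <= a ord0 + b ord0) || meets (vtail a) (vtail b).
Proof.
apply/existsP/orP => [[j] | [le0 | /existsP [i]]]; last 2 first.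
- by exists ord0.
- by rewrite !ffunE; exists (lift ord0 i).
case: (unliftP ord0 j) => [i ->|->] hj; last by left.
by right; apply/existsP; exists i; rewrite !ffunE.
Qed.

Lemma eq_vtail a b : (a == b) = (a ord0 == b ord0 :> nat) && (vtail a == vtail b).
Proof.
apply/eqP/andP => [-> // | [/eqP/val_inj e0 /eqP et]].
apply/ffunP => j; case: (unliftP ord0 j) => [i ->|->] //.
by have := congr1 (fun x : vec k m => x i) et; rewrite !ffunE.
Qed.

Lemma phi_head0 a : a ord0 = 0 :> nat -> phi a = vtail a.
Proof. by rewrite /phi => ->. Qed.

Lemma phi_headN0 a : a ord0 != 0 :> nat -> phi a = vcompl (vtail a).
Proof.
by rewrite /phi => /negbTE ->; apply/ffunP => i; rewrite !ffunE.
Qed.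

End Tail.

Section Ln.

Variables k m : nat.
Hypothesis hk : 2 <= k.
Implicit Types a b : vec k m.+1.

Lemma LnP a : a \in Ln k m ->
  [/\ a ord0 = 0 :> nat \/ a ord0 = k - 1 :> nat,
      2 * weight a <= m.+1 * (k - 1) &
      a ord0 = k - 1 :> nat -> 2 * weight a < m.+1 * (k - 1)].
Proof.
rewrite /Ln; set N := m.+1 * (k - 1).
have := divn_eq N 2; rewrite modn2.
case: ifP => odd_N N_eq; rewrite !inE.
- case/andP => /bigcupP [t _ +] /orP a0; rewrite inE => /eqP wt.
  by have lt_t := ltn_ord t; case: a0 => /eqP a0; split; lia.
- case/orP => [/andP [/bigcupP [t _ +] /orP a0] | /andP [/eqP wt /eqP a0]]; last by split; lia.
  rewrite inE => /eqP wt.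
  by have lt_t := ltn_ord t; case: a0 => /eqP a0; split; lia.
Qed.

Lemma Ln_head a : a \in Ln k m -> a ord0 = 0 :> nat \/ a ord0 = k - 1 :> nat.
Proof. by case/LnP. Qed.

Lemma Ln_vtail_weight a b : a \in Ln k m -> b \in Ln k m -> b ord0 = k - 1 :> nat ->
  weight (vtail a) + weight (vtail b) < m * (k - 1).
Proof.
move=> /LnP [_ wa _] /LnP [_ _ /(_ _) wb] b0.
by have := wb b0; move: wa; rewrite !weight_vtail b0; lia.
Qed.

Lemma Ln_vcompl_nle a b : a \in Ln k m -> b \in Ln k m -> b ord0 = k - 1 :> nat ->
  ~~ vle (vcompl (vtail b)) (vtail a).
Proof.
move=> La Lb b0; apply/negP => /vcompl_vle_weight.
by have := Ln_vtail_weight La Lb b0; lia.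
Qed.

Lemma compatible_phi_mixed a b : a \in Ln k m -> b \in Ln k m ->
  a ord0 = 0 :> nat -> b ord0 = k - 1 :> nat ->
  compatible (phi a) (phi b) = compatible a b.
Proof.
move=> La Lb a0 b0.
have nle := Ln_vcompl_nle La Lb b0.
have ne : vtail a != vcompl (vtail b) by apply: contraNneq nle => <-; apply/forallP.
rewrite phi_head0 // phi_headN0 ?b0; last by apply/eqP; lia.
rewrite /compatible meets_vcompl vle_vcompl (negbTE nle) (negbTE ne).
rewrite meets_vtail !vle_vtail eq_vtail a0 b0.
have -> : (0 == k - 1) = false by lia.
have -> : (k <= 0 + (k - 1)) = false by lia.
have -> : (k - 1 <= 0) = false by lia.
by rewrite /= negbK !andbT andbC.
Qed.

Lemma compatible_phi a b : a \in Ln k m -> b \in Ln k m ->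
  compatible (phi a) (phi b) = compatible a b.
Proof.
move=> La Lb.
case: (Ln_head La) => a0; case: (Ln_head Lb) => b0.
- rewrite !phi_head0 // /compatible meets_vtail !vle_vtail eq_vtail a0 b0.
  by have -> : (k <= 0 + 0) = false by lia.
- exact: compatible_phi_mixed.
- by rewrite compatibleC [compatible a _]compatibleC; apply: compatible_phi_mixed.
- have aN0 : a ord0 != 0 :> nat by apply/eqP; lia.
  have bN0 : b ord0 != 0 :> nat by apply/eqP; lia.
  rewrite !phi_headN0 // /compatible meets_vcompl (Ln_vcompl_nle Lb La a0).
  rewrite (inj_eq (can_inj (@vcomplK _ _))) !vle_vcompl2.
  rewrite meets_vtail !vle_vtail eq_vtail a0 b0 eqxx leqnn.
  have -> : k <= k - 1 + (k - 1) by lia.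
  by rewrite [~~ vle _ _ && _]andbC.
Qed.

End Ln.

Lemma intersecting_antichainP k n (A : {set vec k n}) :
  intersecting A /\ antichain A <-> {in A &, forall a b, compatible a b}.
Proof.
split=> [[iA aA] a b Aa Ab | cA].
  have [i hi] := iA a b Aa Ab.
  rewrite /compatible; apply/andP; split; first by apply/existsP; exists i.
  case: eqP => //= /eqP ne.
  by rewrite aA ?aA // eq_sym.
split=> [a b Aa Ab | a b Aa Ab ne].
  by have /andP [/existsP [i hi] _] := cA a b Aa Ab; exists i.
have /andP [_ /orP [/eqP eq_ab | /andP [//]]] := cA a b Aa Ab.
by rewrite eq_ab eqxx in ne.
Qed.

Theorem lemma4 (k m : nat) (hk : 2 <= k) :
  (forall A : {set vec k m.+1},
      A \subset Ln k m -> intersecting A -> antichain A ->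
      intersecting (@phi k m @: A) /\ antichain (@phi k m @: A)) /\
  (forall B : {set vec k m},
      intersecting B -> antichain B ->
      intersecting [set a in Ln k m | phi a \in B] /\
      antichain [set a in Ln k m | phi a \in B]).
Proof.
split=> [A /subsetP AL iA aA | B iB aB].
  have /intersecting_antichainP cA := conj iA aA.
  apply/intersecting_antichainP => _ _ /imsetP [a Aa ->] /imsetP [b Ab ->].
  by rewrite compatible_phi ?AL ?cA.
have /intersecting_antichainP cB := conj iB aB.
apply/intersecting_antichainP => a b; rewrite !inE => /andP [La Ba] /andP [Lb Bb].
by rewrite -(compatible_phi hk La Lb) cB.
Qed.
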